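(* Assume the standing setup. Let $\lambda\in\mathbb R\setminus\overline{\mathrm{Supp}(\mu_X)}$ and let $\tilde{\mathbf g}\in(\mathbb R\setminus\{0\})^K$ be any solution of the QVE $\mathbf 1_K=\lambda\tilde{\mathbf g}-\tilde{\mathbf g}\odot\boldsymbol\Gamma_K(\tilde{\mathbf g}-\mathbf 1_K)$. Then $\tilde{\mathbf g}=\mathbf g(\lambda)$ if and only if the linear system $(\mathbf D_{\tilde{\mathbf g}}^{-2}-\boldsymbol\Gamma_K)\mathbf y=\mathbf 1_K$ admits a unique solution $\mathbf y$, and this solution satisfies $\mathbf y\succ\mathbf 0_K$.
   Context: Standing setup: $K\ge1$, $\boldsymbol\rho=(\rho_k)$ with $\rho_k\in(0,1)$, $\sum\rho_k=1$; $\mathbf S_K=(s_{kl})$ symmetric $K\times K$ with $s_{kl}>0$; $\boldsymbol\Gamma_K=\mathbf S_K\mathbf D_{\boldsymbol\rho}$ where $\mathbf D_{\mathbf v}$ is the diagonal matrix with diagonal $\mathbf v$. The random matrix $\mathbf X=\mathbf H\odot\boldsymbol\Sigma^{\odot1/2}-N^{-1/2}\mathrm{Diag}(\boldsymbol\Sigma\mathbf 1)$, where $[N]$ is split into consecutive blocks $B_1,\dots,B_K$ with $|B_k|/N\to\rho_k$, $\Sigma_{ij}=s_{kl}$ for $i\in B_k,j\in B_l$, $\mathbf H$ symmetric with independent standard Gaussian entries on and above the diagonal, $\odot$ Hadamard product. $\mu_X$ is the a.s. limiting spectral distribution of $\mathbf X/\sqrt N$. QVE: for $z\in\mathbb H_-=\{\Im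 z<0\}$, $\mathbf g(z)\in(\mathbb H_+)^K$ is the unique solution in $(\mathbb H_+)^K$ of $\mathbf 1_K=z\mathbf g-\mathbf g\odot\boldsymbol\Gamma_K(\mathbf g-\mathbf 1_K)$; $\sum_k\rho_kg_k$ is the Stieltjes transform $\int(z-\lambda)^{-1}d\mu_X$; $\mathbf g$ extends continuously to $\mathbb H_-\cup\mathbb R$ and analytically off $\mathrm{Supp}(\mu_X)$, and $\mathbf g(\lambda)$ for real $\lambda$ denotes this extension. $\succ$ is entrywise strict inequality. *)

From mathcomp Require Import all_boot all_order all_algebra.
From mathcomp Require Import all_classical all_reals all_analysis.
From mathcomp Require Import complex.
Import Order.TTheory GRing.Theory Num.Theory.
Import numFieldNormedType.Exports.

Set Implicit Arguments.
Unset Strict Implicit.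
Unset Printing Implicit Defensive.

Local Open Scope ring_scope.
Local Open Scope complex_scope.

Definition hadamard (F : pzRingType) m n (A B : 'M[F]_(m, n)) : 'M[F]_(m, n) :=
  map2_mx *%R A B.

Definition GammaK (R : pzRingType) K (S : 'M[R]_K) (rho : 'rV[R]_K) : 'M[R]_K :=
  S *m diag_mx rho.

Definition QVE (F : fieldType) K (G : 'M[F]_K) (z : F) (g : 'cV[F]_K) : Prop :=
  const_mx 1 = z *: g - hadamard g (G *m (g - const_mx 1)).

Definition cmx (R : rcfType) m n (A : 'M[R]_(m, n)) : 'M[R[i]]_(m, n) :=
  map_mx (fun x => x%:C) A.

Definition msupport (R : realType) (mu : probability R R) : set R :=
  [set x | forall e : R, 0 < e -> (0 < mu (ball x e))%E].

(* Stieltjes transform  z |-> \int (z - x)^{-1} dmu(x)  (integral of a complex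
   function = integral of its real part + i * integral of its imaginary part). *)
Definition stieltjes (R : realType) (mu : probability R R) (z : R[i]) : R[i] :=
  (Rintegral mu setT (fun x : R => complex.Re ((z - x%:C)^-1)))
  +i* (Rintegral mu setT (fun x : R => complex.Im ((z - x%:C)^-1))).

(* g(z) -> v as z -> lam within the open lower half-plane H_- (this defines
   the value at lam of the continuous extension of g to H_- \cup R). *)
Definition lim_lower (R : rcfType) K (g : R[i] -> 'cV[R[i]]_K) (lam : R)
    (v : 'cV[R[i]]_K) : Prop :=
  forall e : R, 0 < e -> exists2 d : R, 0 < d &
    forall z : R[i], complex.Im z < 0 -> ComplexField.Normc.normc (z - lam%:C) < d ->
      forall k : 'I_K, ComplexField.Normc.normc (g z k 0 - v k 0) < e.

(* For [z] in the lower half-plane, the imaginary part of the QVE says that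
   [u := Im g(z) > 0] solves [(D_{|g(z)|}^-2 - Gamma) u = - Im z], and since
   [sum_k rho_k g_k] is the Stieltjes transform of a measure with no mass near
   [lam], [Im g(z) = O(- Im z)] for [z] near [lam].  Both directions rest on a
   discrete minimum principle for [diag a - G] with [G >= 0]: evaluating at the
   index where [w / u] is extremal, a positive [u] with [(diag a - G) u > 0]
   controls every [w] from below and from above.
   If [g(lam - i eps) -> gt], the operators [D_{|g|}^-2 - Gamma] tend to
   [M := D_gt^-2 - Gamma] and the minimum principle survives the limit:
   [M w >= 0] forces [w >= 0], so [M] is invertible and [M^-1 1 > 0].
   Conversely, if [M y = 1] with [y > 0], the geometric mean
   [p := sqrt (y Im g(z) / - Im z)] is (by AM-GM) a supersolution of
   [D_{|g||gt|}^-1 - Gamma], whereas the difference of the two QVEs gives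
   [(D_{|g||gt|}^-1 - Gamma) |g - gt| <= |z - lam|]; hence
   [|g(z) - gt| <= |z - lam| p], and [p] is bounded. *)

From mathcomp Require Import all_boot all_order all_algebra.
From mathcomp Require Import all_classical all_reals all_analysis.
From mathcomp Require Import complex.
From mathcomp Require Import ring lra.
Import Order.TTheory GRing.Theory Num.Theory.
Import numFieldNormedType.Exports.

Set Implicit Arguments.
Unset Strict Implicit.
Unset Printing Implicit Defensive.

Local Open Scope ring_scope.
Local Open Scope complex_scope.

Definition diagsub (R : pzRingType) K (a : 'I_K -> R) (G : 'M[R]_K) (w : 'I_K -> R) k :=
  a k * w k - \sum_l G k l * w l.

Lemma diagsubZ (R : comPzRingType) K a (G : 'M[R]_K) (t : R) w k :
  diagsub a G (fun l => t * w l) k = t * diagsub a G w k.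
Proof.
rewrite /diagsub mulrBr mulr_sumr mulrCA; congr (_ - _).
by apply: eq_bigr => l _; rewrite mulrCA.
Qed.

Lemma diagsubN (R : comPzRingType) K a (G : 'M[R]_K) w k :
  diagsub a G (fun l => - w l) k = - diagsub a G w k.
Proof.
rewrite -mulN1r -diagsubZ; congr diagsub.
by apply/funext => l; rewrite mulN1r.
Qed.

Lemma mulmx_diag_sub_entry (F : fieldType) n (G : 'M[F]_n) (h w : 'cV[F]_n) k :
  ((diag_mx (map_mx (fun x => x ^- 2) h^T) - G) *m w) k 0
    = diagsub (fun l => (h l 0 ^+ 2)^-1) G (fun l => w l 0) k.
Proof. by rewrite mulmxBl mul_diag_mx !mxE. Qed.

Lemma GammaK_ge0 (R : numDomainType) K (S : 'M[R]_K) (rho : 'rV[R]_K) :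
  (forall k l, 0 <= S k l) -> (forall k, 0 <= rho 0 k) ->
  forall k l, 0 <= GammaK S rho k l.
Proof. by move=> S_ge0 rho_ge0 k l; rewrite /GammaK mul_mx_diag mxE mulr_ge0. Qed.

Lemma unitmx_of_ker0 (F : fieldType) n (M : 'M[F]_n) :
  (forall w : 'cV_n, M *m w = 0 -> w = 0) -> M \in unitmx.
Proof.
move=> M_ker0; rewrite -unitmx_tr -row_free_unit; apply: inj_row_free => v vMT0.
apply: trmx_inj; rewrite trmx0; apply: M_ker0.
by rewrite -[M]trmxK -trmx_mul vMT0 trmx0.
Qed.

Lemma exists_arg_min d (T : orderType d) n (F : 'I_n -> T) (i0 : 'I_n) :
  exists j, forall k, (F j <= F k)%O.
Proof.
have [j _ Hj] := Order.TotalTheory.arg_minP F (i0 := i0) isT.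
by exists j => k; apply: Hj.
Qed.

Section MinimumPrinciple.
Variables (R : realFieldType) (K : nat) (G : 'M[R]_K).
Hypothesis G_ge0 : forall k l, 0 <= G k l.
Implicit Types (a p u w x : 'I_K -> R) (eps d : R).

Lemma diagsub_min_ratio a p w j : (forall k, 0 < p k) ->
  (forall k, w j / p j <= w k / p k) ->
  diagsub a G w j <= w j / p j * diagsub a G p j.
Proof.
move=> p_gt0 Hj; rewrite /diagsub mulrBr.
have -> : w j / p j * (a j * p j) = a j * w j by field; rewrite gt_eqF.
rewrite lerD2l lerN2 mulr_sumr; apply: ler_sum => l _.
rewrite mulrCA; apply: ler_wpM2l => //.
by have := Hj l; rewrite ler_pdivlMr.
Qed.

Lemma diagsub_lower_bound a u eps w : (0 < K)%N ->
  (forall k, 0 < u k) -> 0 < eps -> (forall k, diagsub a G u k = eps) ->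
  exists j, forall k, diagsub a G w j / eps * u k <= w k.
Proof.
move=> K_gt0 u_gt0 eps_gt0 Hu.
have [j Hj] := exists_arg_min (fun k => w k / u k) (Ordinal K_gt0).
exists j => k.
have Hwj : diagsub a G w j / eps <= w j / u j.
  by rewrite ler_pdivrMr // -(Hu j); apply: diagsub_min_ratio.
apply: (le_trans (ler_wpM2r (ltW (u_gt0 k)) Hwj)).
by have := Hj k; rewrite ler_pdivlMr.
Qed.

Lemma diagsub_upper_bound a p x d :
  (forall k, 0 < p k) -> (forall k, 0 <= x k) ->
  (forall k, 1 <= diagsub a G p k) -> (forall k, diagsub a G x k <= d) ->
  forall k, x k <= d * p k.
Proof.
move=> p_gt0 x_ge0 Hp Hx k.
have [j Hj] := exists_arg_min (fun k => - x k / p k) k.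
have Hxj : x j / p j <= d.
  apply: le_trans (Hx j); rewrite -lerN2 -diagsubN.
  apply: le_trans (diagsub_min_ratio a p_gt0 Hj) _.
  rewrite !mulNr lerN2 -{1}[x j / p j]mulr1 ler_wpM2l //.
  by rewrite divr_ge0 // ltW.
have := Hj k; rewrite !mulNr lerN2 => Hk.
by rewrite -ler_pdivrMr //; apply: le_trans Hk Hxj.
Qed.

End MinimumPrinciple.

Section ApproximateMinimumPrinciple.
Variables (R : realFieldType) (K : nat) (G : 'M[R]_K) (a : 'I_K -> R) (c : R).
Hypotheses (K_gt0 : (0 < K)%N) (G_ge0 : forall k l, 0 <= G k l).
Hypothesis approx : forall eta : R, 0 < eta -> exists eps (a' u : 'I_K -> R),
  [/\ 0 < eps, forall k, 0 < u k <= c * eps, forall k, diagsub a' G u k = eps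
    & forall k, `|a' k - a k| < eta].

Lemma diagsub_approx_lower_bound w eta : 0 < eta ->
  exists j, exists2 s : 'I_K -> R, forall k, 0 < s k <= c &
    forall k, (diagsub a G w j - eta * \sum_l `|w l|) * s k <= w k.
Proof.
move=> eta_gt0; have [eps [a' [u [eps_gt0 Hu Hu_eps Ha']]]] := approx eta_gt0.
have u_gt0 k : 0 < u k by case/andP: (Hu k).
have [j Hj] := diagsub_lower_bound G_ge0 w K_gt0 u_gt0 eps_gt0 Hu_eps.
exists j, (fun k => u k / eps).
  by move=> k; case/andP: (Hu k) => ? ?; rewrite divr_gt0 // ler_pdivrMr.
move=> k; apply: le_trans (Hj k); rewrite mulrAC -mulrA.
apply: ler_wpM2r; first by rewrite divr_ge0 ?ltW.
have -> : diagsub a' G w j = diagsub a G w j + (a' j - a j) * w j.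
  by rewrite /diagsub; ring.
rewrite lerD2l; apply: lerNnormlW; rewrite normrM.
apply: ler_pM; rewrite ?normr_ge0 //; first exact: ltW.
by rewrite (bigD1 j) //= lerDl sumr_ge0.
Qed.

Lemma diagsub_ge0_ge0 w : (forall k, 0 <= diagsub a G w k) -> forall k, 0 <= w k.
Proof.
move=> Hw k; set W := \sum_l `|w l|.
have W_ge0 : 0 <= W by rewrite sumr_ge0.
apply/ler_addgt0Pr => e e_gt0.
set eta := e / (W * `|c| + 1).
have eta_gt0 : 0 < eta by rewrite divr_gt0 // ltr_wpDl ?mulr_ge0.
have [j [s Hs Hj]] := diagsub_approx_lower_bound w eta_gt0.
have /andP[sk_gt0 sk_le_c] := Hs k.
have c_gt0 : 0 < c := lt_le_trans sk_gt0 sk_le_c.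
have Wc_ge0 : 0 <= W * c by rewrite mulr_ge0 // ltW.
have etaWc_le : eta * W * c <= e.
  rewrite /eta gtr0_norm // -mulrA mulrAC ler_pdivrMr ?ltr_wpDl //.
  by rewrite ler_pM2l //; lra.
have Ds_ge0 : 0 <= diagsub a G w j * s k by rewrite mulr_ge0 // ltW.
have etaWs_le : eta * W * s k <= eta * W * c.
  by rewrite ler_wpM2l // mulr_ge0 // ltW.
by have := Hj k; rewrite -/W mulrBl; lra.
Qed.

Lemma diagsub_ge1_gt0 w : (forall k, 1 <= diagsub a G w k) -> forall k, 0 < w k.
Proof.
move=> Hw k; set W := \sum_l `|w l|.
have W_ge0 : 0 <= W by rewrite sumr_ge0.
have eta_gt0 : 0 < (W + 1)^-1 by rewrite invr_gt0 ltr_wpDl.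
have [j [s Hs Hj]] := diagsub_approx_lower_bound w eta_gt0.
apply: lt_le_trans (Hj k); rewrite -/W mulr_gt0 //; last by case/andP: (Hs k).
have : (W + 1)^-1 * W < 1 by rewrite mulrC ltr_pdivrMr ?ltr_wpDl //; lra.
by have := Hw j; lra.
Qed.

Lemma diagsub_eq0 w : (forall k, diagsub a G w k = 0) -> forall k, w k = 0.
Proof.
move=> Hw k.
have w_ge0 : 0 <= w k by apply: diagsub_ge0_ge0 => l; rewrite Hw.
have wN_ge0 : 0 <= - w k.
  by apply: (@diagsub_ge0_ge0 (fun l => - w l)) => l; rewrite diagsubN Hw oppr0.
by apply/eqP; rewrite eq_le -oppr_ge0 wN_ge0 w_ge0.
Qed.

Lemma unitmx_inv_const1_gt0 (M : 'M[R]_K) :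
  (forall (w : 'cV_K) k, (M *m w) k 0 = diagsub a G (fun l => w l 0) k) ->
  M \in unitmx /\ forall k, 0 < (invmx M *m (const_mx 1 : 'cV_K)) k 0.
Proof.
move=> M_entry.
have M_unit : M \in unitmx.
  apply: unitmx_of_ker0 => w Mw0; apply/matrixP => k j; rewrite ord1 mxE.
  by apply: (@diagsub_eq0 (fun l => w l 0)) => l; rewrite -M_entry Mw0 mxE.
split => // k; apply: (@diagsub_ge1_gt0 (fun k => (invmx M *m const_mx 1) k 0)) => l.
by rewrite -M_entry mulKVmx // mxE.
Qed.

End ApproximateMinimumPrinciple.

Section SqrtSupersolution.
Variables (R : rcfType) (K : nat).

Lemma sqrt_mul_le_mean (s v y : R) : 0 < s -> 0 <= v -> 0 <= y ->
  Num.sqrt (v * y) <= (s * v + y / s) / 2.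
Proof.
move=> s_gt0 v_ge0 y_ge0.
have -> : v * y = (s * v) * (y / s) by field; rewrite gt_eqF.
have sv_ge0 : 0 <= s * v by rewrite mulr_ge0 // ltW.
have ys_ge0 : 0 <= y / s by rewrite divr_ge0 // ltW.
rewrite sqrtrM //.
have := (leif_mean_square (Num.sqrt (s * v)) (Num.sqrt (y / s))).1.
by rewrite !sqr_sqrtr.
Qed.

(* With [A := (G v)_k] and [B := (G y)_k] one has [v_k = a_k^2 (1 + A)] and
   [y_k = b_k^2 (1 + B)]; AM-GM with the weight [s := sqrt ((1 + B) / (1 + A))]
   leaves the excess [(sqrt (1 + A) - sqrt (1 + B))^2 / (2 sqrt ((1 + A) (1 + B)))]. *)
Lemma diagsub_sqrt_ge1 (G : 'M[R]_K) (a b v y : 'I_K -> R) k :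
  (forall k l, 0 <= G k l) -> (forall l, 0 < v l) -> (forall l, 0 < y l) ->
  0 < a k -> 0 < b k ->
  diagsub (fun l => (a l ^+ 2)^-1) G v k = 1 ->
  diagsub (fun l => (b l ^+ 2)^-1) G y k = 1 ->
  1 <= diagsub (fun l => (a l * b l)^-1) G (fun l => Num.sqrt (v l * y l)) k.
Proof.
rewrite /diagsub => G_ge0 v_gt0 y_gt0 ak_gt0 bk_gt0 Hv Hy.
set A := \sum_l G k l * v l in Hv; set B := \sum_l G k l * y l in Hy.
have A_ge0 : 0 <= A by apply: sumr_ge0 => l _; rewrite mulr_ge0 // ltW.
have B_ge0 : 0 <= B by apply: sumr_ge0 => l _; rewrite mulr_ge0 // ltW.
set al := Num.sqrt (1 + A); set be := Num.sqrt (1 + B).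
have al_gt0 : 0 < al by rewrite sqrtr_gt0; lra.
have be_gt0 : 0 < be by rewrite sqrtr_gt0; lra.
have alE : al ^+ 2 = 1 + A by rewrite sqr_sqrtr //; lra.
have beE : be ^+ 2 = 1 + B by rewrite sqr_sqrtr //; lra.
have vk : v k = (a k * al) ^+ 2 by rewrite exprMn alE -Hv; field; rewrite gt_eqF.
have yk : y k = (b k * be) ^+ 2 by rewrite exprMn beE -Hy; field; rewrite gt_eqF.
have -> : (a k * b k)^-1 * Num.sqrt (v k * y k) = al * be.
  rewrite vk yk -exprMn sqrtr_sqr ger0_norm ?mulr_ge0 ?ltW //.
  by field; rewrite !gt_eqF.
set s := be / al; have s_gt0 : 0 < s by rewrite divr_gt0.
have sum_le : \sum_l G k l * Num.sqrt (v l * y l) <= (s * A + B / s) / 2.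
  have -> : (s * A + B / s) / 2 = \sum_l G k l * ((s * v l + y l / s) / 2).
    rewrite (eq_bigr (fun l => s / 2 * (G k l * v l) + (2 * s)^-1 * (G k l * y l))).
      by rewrite big_split /= -!mulr_sumr -/A -/B; field; rewrite gt_eqF.
    by move=> l _; field; rewrite gt_eqF.
  apply: ler_sum => l _; apply: ler_wpM2l => //.
  by apply: sqrt_mul_le_mean; rewrite ?ltW.
have excess : al * be - (s * A + B / s) / 2 - 1 = (al - be) ^+ 2 / (2 * al * be).
  rewrite /s -[A](addKr 1) -[B](addKr 1) -alE -beE.
  by field; rewrite !gt_eqF.
have : 0 <= (al - be) ^+ 2 / (2 * al * be) by rewrite divr_ge0 ?sqr_ge0 // !mulr_ge0 // ltW.
lra.
Qed.

End SqrtSupersolution.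

Lemma dist_inv_sqr_lt (R : realFieldType) (m A N e eta : R) : 0 < m -> m <= A ->
  `|N - A| < e -> e <= m / 2 -> e <= eta * m ^+ 3 / 10 ->
  `|(N ^+ 2)^-1 - (A ^+ 2)^-1| < eta.
Proof.
move=> m_gt0 m_le_A NA_lt e_le_m e_le_eta.
have A_gt0 : 0 < A := lt_le_trans m_gt0 m_le_A.
have /andP[NA1 NA2] : - e < N - A < e by rewrite -ltr_norml.
have N_gt0 : 0 < N by lra.
have -> : (N ^+ 2)^-1 - (A ^+ 2)^-1 = (A - N) * (A + N) / (N ^+ 2 * A ^+ 2).
  by field; rewrite !gt_eqF.
have NA_gt0 : 0 < N ^+ 2 * A ^+ 2 by rewrite mulr_gt0 ?exprn_gt0.
rewrite normrM normfV normrM [`|A + N|]ger0_norm; last lra.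
rewrite [`|N ^+ 2 * A ^+ 2|]gtr0_norm // ltr_pdivrMr //.
have eta_gt0 : 0 < eta.
  have : 0 < eta * m ^+ 3 / 10 by lra.
  by rewrite pmulr_lgt0 ?invr_gt0 // pmulr_lgt0 // exprn_gt0.
have num_lt : `|A - N| * (A + N) < e * (5 / 2 * A).
  by rewrite distrC; apply: ltr_pM; rewrite ?normr_ge0 //; lra.
have num_le : e * (5 / 2 * A) <= eta * m ^+ 3 * A / 4.
  by have := ler_wpM2r (ltW A_gt0) e_le_eta; lra.
have m3_le : eta * m ^+ 3 * A <= eta * A ^+ 3 * A.
  by rewrite ler_pM2r // ler_pM2l // lerXn2r // nnegrE ltW.
have A2_le : A ^+ 2 <= 4 * N ^+ 2.
  have : (A / 2) ^+ 2 <= N ^+ 2 by rewrite lerXn2r ?nnegrE //; lra.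
  lra.
have A4_le : eta * A ^+ 3 * A / 4 <= eta * (N ^+ 2 * A ^+ 2).
  have -> : eta * A ^+ 3 * A / 4 = eta * A ^+ 2 * (A ^+ 2 / 4) by ring.
  have -> : eta * (N ^+ 2 * A ^+ 2) = eta * A ^+ 2 * N ^+ 2 by ring.
  by apply: ler_wpM2l; [rewrite mulr_ge0 ?sqr_ge0 // ltW | lra].
lra.
Qed.

Lemma entry_le_of_weighted_sum (R : realFieldType) K (rho u : 'I_K -> R) (B : R) k :
  (forall l, 0 < rho l) -> (forall l, 0 <= u l) -> \sum_l rho l * u l <= B ->
  u k <= (\sum_l (rho l)^-1) * B.
Proof.
move=> rho_gt0 u_ge0 sum_le.
have B_ge : rho k * u k <= B.
  apply: le_trans _ sum_le; rewrite (bigD1 k) //= lerDl.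
  by apply: sumr_ge0 => l _; exact: mulr_ge0 (ltW (rho_gt0 l)) (u_ge0 l).
have B_ge0 : 0 <= B := le_trans (mulr_ge0 (ltW (rho_gt0 k)) (u_ge0 k)) B_ge.
apply: (@le_trans _ _ ((rho k)^-1 * B)).
  by rewrite ler_pdivlMl.
rewrite ler_wpM2r // (bigD1 k) //= lerDl.
by apply: sumr_ge0 => l _; rewrite invr_ge0 ltW.
Qed.

Lemma QVE_inv (F : fieldType) n (G : 'M[F]_n) z g k : QVE G z g -> g k 0 != 0 ->
  (g k 0)^-1 = z - \sum_l G k l * (g l 0 - 1).
Proof.
move=> /(congr1 (fun M : 'cV_n => M k 0)); rewrite !mxE => Eg gk_neq0.
apply: (mulfI gk_neq0); rewrite mulfV // {1}Eg mulrBr [z * _]mulrC.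
by congr (_ - _ * _); apply: eq_bigr => l _; rewrite !mxE.
Qed.

Lemma cmx_entry (R : rcfType) m n (A : 'M[R]_(m, n)) i j : cmx A i j = (A i j)%:C.
Proof. exact: mxE. Qed.

Section ComplexNorm.
Variable R : rcfType.
Local Notation normc := (@ComplexField.Normc.normc R).

Lemma Im_sum n (F : 'I_n -> R[i]) : complex.Im (\sum_i F i) = \sum_i complex.Im (F i).
Proof. exact: (@raddf_sum _ _ (@complex.Im R : Rcomplex R -> R)). Qed.

Lemma Im_sub (x y : R[i]) : complex.Im (x - y) = complex.Im x - complex.Im y.
Proof. by case: x; case: y. Qed.

Lemma Im_realM (r : R) (x : R[i]) : complex.Im (r%:C * x) = r * complex.Im x.
Proof. by case: x => a b /=; rewrite mul0r addr0. Qed.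

Lemma Im_inv (x : R[i]) : complex.Im x^-1 = - complex.Im x / normc x ^+ 2.
Proof.
by case: x => a b; rewrite /ComplexField.Normc.normc /= sqr_sqrtr ?addr_ge0 ?sqr_ge0 ?mulNr.
Qed.

Lemma normc_real (r : R) : normc r%:C = `|r|.
Proof. by rewrite /ComplexField.Normc.normc /= expr0n /= addr0 sqrtr_sqr. Qed.

Lemma normc_ge0 (x : R[i]) : 0 <= normc x.
Proof. by case: x => a b; rewrite /ComplexField.Normc.normc sqrtr_ge0. Qed.

Lemma normc_gt0 (x : R[i]) : x != 0 -> 0 < normc x.
Proof.
move=> x_neq0; rewrite lt_neqAle normc_ge0 andbT eq_sym.
by apply: contra x_neq0 => /eqP/ComplexField.Normc.eq0_normc ->.
Qed.

Lemma normc_sum n (F : 'I_n -> R[i]) : normc (\sum_l F l) <= \sum_l normc (F l).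
Proof.
elim/big_ind2: _ => [|x1 y1 x2 y2 h1 h2|//]; first by rewrite ComplexField.Normc.normc0.
by apply: le_trans (le_normcD _ _) _; apply: lerD.
Qed.

Lemma normc_distC (x y : R[i]) : normc (x - y) = normc (y - x).
Proof. by rewrite -normcN opprB. Qed.

Lemma Re_le_normc (x : R[i]) : `|complex.Re x| <= normc x.
Proof.
case: x => a b /=; rewrite /ComplexField.Normc.normc -sqrtr_sqr.
by apply: ler_wsqrtr; rewrite lerDl sqr_ge0.
Qed.

Lemma ler_dist_normc_real (x : R[i]) (r : R) : `|normc x - `|r| | <= normc (x - r%:C).
Proof.
rewrite ler_norml; apply/andP; split.
  by have := le_normcD (r%:C - x) x; rewrite subrK normc_real normc_distC; lra.
by have := le_normcD (x - r%:C) r%:C; rewrite subrK normc_real; lra.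
Qed.

End ComplexNorm.

Lemma continuous_inv_sqr_dist (R : realType) (a b : R) : b != 0 ->
  continuous (fun x : R => ((a - x) ^+ 2 + b ^+ 2)^-1).
Proof.
move=> b_neq0 x; apply: (@continuousV _ _ (fun y => (a - y) ^+ 2 + b ^+ 2)).
  by rewrite gt_eqF // ltr_pwDr ?sqr_ge0 // exprn_even_gt0.
apply: (@continuousD _ _ _ (fun y => (a - y) ^+ 2) (fun=> b ^+ 2)); last first.
  exact: cst_continuous.
have cB : {for x, continuous (fun y : R => a - y)}.
  by apply: (@continuousB _ _ _ (fun=> a) id); [exact: cst_continuous|exact: cvg_id].
exact: (@continuousM _ _ (fun y => a - y) (fun y => a - y)).
Qed.

Section StieltjesOffSupport.
Local Open Scope classical_set_scope.
Variables (R : realType) (mu : probability R R).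

Lemma negligible_ball_off_support lam : ~ closure (msupport mu) lam ->
  exists2 r : R, 0 < r & mu.-negligible (ball lam r).
Proof.
move=> /existsNP [B] /not_implyP [nB] /set0P /negP; rewrite negbK => /eqP suppB0.
have [r r_gt0 rB] := (nbhs_ballP _ _).1 nB; have {}r_gt0 : 0 < r := r_gt0.
have null_nbhs x : exists e : R, 0 < e /\ (ball lam r x -> mu (ball x e) = 0%E).
  case: (pselect (ball lam r x)) => bx; last by exists 1.
  have : ~ msupport mu x.
    by move=> sx; rewrite -[False]/(set0 x) -suppB0; split => //; apply: rB.
  move=> /existsNP [e] /not_implyP [e_gt0 He]; exists e; split => // _.
  by apply/eqP; rewrite eq_le measure_ge0 andbT leNgt; apply/negP.
have [E HE] := choice null_nbhs.
exists (r / 2); first by rewrite divr_gt0.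
have := @segment_compact R (lam - r / 2) (lam + r / 2); rewrite compact_cover => cpt.
have [|x x_seg|D D_sub cover] := cpt R `[lam - r / 2, lam + r / 2] (fun x => ball x (E x)).
- by move=> x _; apply: ball_open.
- by exists x => //; apply: ballxx; apply: (HE x).1.
have ball_seg : ball lam (r / 2) `<=` `[lam - r / 2, lam + r / 2].
  by move=> x; rewrite ball_itv /= !in_itv /= => /andP[x1 x2]; rewrite !ltW.
apply: (negligibleS (subset_trans ball_seg cover)).
rewrite /classical_sets.cover bigcup_fset big_seq.
elim/big_ind: _ => [|A1 A2|x Dx]; first exact: negligible_set0.
  exact: negligibleU.
have : ball lam r x.
  move: (D_sub x Dx); rewrite inE /= in_itv /= ball_itv /= in_itv /=.
  by move=> /andP[x1 x2]; apply/andP; split; lra.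
move=> /(HE x).2 /eqP null_x.
by apply/negligibleP; [apply: measurable_realfun.open_measurable; apply: ball_open|apply/eqP].
Qed.

Lemma Im_stieltjes_off_support lam : ~ closure (msupport mu) lam ->
  exists2 d : R, 0 < d & forall z : R[i], complex.Im z < 0 ->
    `|complex.Re z - lam| < d -> complex.Im (stieltjes mu z) <= - complex.Im z / d ^+ 2.
Proof.
move=> /negligible_ball_off_support [r r_gt0 null_r].
exists (r / 2); first by rewrite divr_gt0.
move=> [a b] /= b_lt0 a_near.
set c := - b / (r / 2) ^+ 2.
set f := fun x : R => - b * ((a - x) ^+ 2 + b ^+ 2)^-1.
have -> : (fun x : R => complex.Im ((a +i* b - x%:C)^-1)) = f.
  by apply/funext => x /=; rewrite subr0 /f mulNr.
have f_ge0 x : 0 <= f x by rewrite mulr_ge0 ?invr_ge0 ?addr_ge0 ?sqr_ge0 //; lra.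
have f_meas : measurable_fun setT f.
  apply: measurable_realfun.continuous_measurable_fun => x.
  apply: (@continuousM _ _ (fun=> - b) (fun y => ((a - y) ^+ 2 + b ^+ 2)^-1)).
    exact: cst_continuous.
  by apply: continuous_inv_sqr_dist; rewrite lt_eqF.
have f_le_c x : ~ ball lam r x -> f x <= c.
  rewrite ball_itv /= in_itv /= => /negP; rewrite negb_and -!leNgt => x_far.
  have ax_ge : r / 2 <= `|a - x|.
    move: a_near; rewrite ltr_norml => /andP[? ?].
    by case/orP: x_far => ?; [rewrite ger0_norm|rewrite ler0_norm]; lra.
  have r2_gt0 : 0 < (r / 2) ^+ 2 by rewrite exprn_gt0 // divr_gt0.
  have r2_le : (r / 2) ^+ 2 <= (a - x) ^+ 2 + b ^+ 2.
    rewrite -[(a - x) ^+ 2]real_normK ?num_real // ler_wpDr ?sqr_ge0 //.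
    by rewrite lerXn2r // ?nnegrE ?ltW ?divr_gt0.
  rewrite /f /c ler_pM2l; last lra.
  by rewrite lef_pV2 ?posrE // (lt_le_trans r2_gt0 r2_le).
have int_le : (\int[mu]_(x in setT) (f x)%:E <= c%:E)%E.
  apply: (@le_trans _ _ (\int[mu]_(x in setT) (cst c%:E) x)%E).
    apply: ae_ge0_le_integral => //.
    - by move=> x _; rewrite lee_fin.
    - exact/measurable_realfun.measurable_EFinP.
    - by move=> x _; rewrite lee_fin /c divr_ge0 ?sqr_ge0 //; lra.
    - apply: (negligibleS _ null_r) => x /= not_le.
      by apply: contrapT => x_far; apply: not_le => _; rewrite lee_fin f_le_c.
  rewrite integral_cst //; set m := (X in (_ * X)%E).
  have -> : m = 1%E by exact: probability_setT.
  by rewrite mule1.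
have int_ge0 : (0 <= \int[mu]_(x in setT) (f x)%:E)%E.
  by apply: integral_ge0 => x _; rewrite lee_fin.
by rewrite /Rintegral; move: int_le int_ge0; case: (\int[mu]_(x in setT) _)%E.
Qed.

End StieltjesOffSupport.

Lemma Im_le_off_support (R : realType) K (rho : 'I_K -> R) (mu : probability R R)
    (g : R[i] -> 'cV[R[i]]_K) (lam : R) :
  (forall k, 0 < rho k) ->
  (forall z, complex.Im z < 0 -> forall k, 0 < complex.Im (g z k 0)) ->
  (forall z, complex.Im z < 0 -> \sum_k (rho k)%:C * g z k 0 = stieltjes mu z) ->
  ~ closure (msupport mu) lam ->
  exists d c : R, 0 < d /\ forall z, complex.Im z < 0 -> `|complex.Re z - lam| < d ->
    forall k, complex.Im (g z k 0) <= c * - complex.Im z.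
Proof.
move=> rho_gt0 g_Im_gt0 g_stieltjes /Im_stieltjes_off_support[d d_gt0 stieltjes_le].
exists d, ((\sum_l (rho l)^-1) / d ^+ 2); split => // z z_lt0 z_near k.
rewrite mulrAC -mulrA.
apply: (entry_le_of_weighted_sum (u := fun l => complex.Im (g z l 0))) => // [l|].
  exact: ltW (g_Im_gt0 z z_lt0 l).
apply: le_trans (stieltjes_le z z_lt0 z_near).
by rewrite -g_stieltjes // Im_sum; under [X in _ <= X]eq_bigr => l _ do rewrite Im_realM.
Qed.

Section QVEOffSupport.
Variables (R : rcfType) (K : nat) (G : 'M[R]_K) (g : R[i] -> 'cV[R[i]]_K).
Variables (lam : R) (h : 'cV[R]_K) (c d : R).
Local Notation normc := (@ComplexField.Normc.normc R).
Hypotheses (K_gt0 : (0 < K)%N) (G_ge0 : forall k l, 0 <= G k l).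
Hypothesis g_Im_gt0 : forall z, complex.Im z < 0 -> forall k, 0 < complex.Im (g z k 0).
Hypothesis g_QVE : forall z, complex.Im z < 0 -> QVE (cmx G) z (g z).
Hypotheses (h_neq0 : forall k, h k 0 != 0) (h_QVE : QVE G lam h).
Hypothesis d_gt0 : 0 < d.
Hypothesis g_Im_le : forall z, complex.Im z < 0 -> `|complex.Re z - lam| < d ->
  forall k, complex.Im (g z k 0) <= c * - complex.Im z.

Lemma g_neq0 z k : complex.Im z < 0 -> g z k 0 != 0.
Proof. by move=> z_lt0; apply: contraTneq (g_Im_gt0 z_lt0 k) => ->; rewrite ltxx. Qed.

Lemma g_inv z k : complex.Im z < 0 ->
  (g z k 0)^-1 = z - \sum_l (G k l)%:C * (g z l 0 - 1).
Proof.
move=> z_lt0; rewrite (QVE_inv (g_QVE z_lt0) (g_neq0 k z_lt0)).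
by congr (z - _); apply: eq_bigr => l _; rewrite cmx_entry.
Qed.

Lemma diagsub_Im_g z k : complex.Im z < 0 ->
  diagsub (fun l => (normc (g z l 0) ^+ 2)^-1) G (fun l => complex.Im (g z l 0)) k
    = - complex.Im z.
Proof.
move=> z_lt0; have := congr1 (@complex.Im R) (g_inv k z_lt0).
rewrite Im_inv Im_sub Im_sum; under eq_bigr => l _ do rewrite Im_realM Im_sub /= subr0.
by rewrite /diagsub mulrC mulrN; lra.
Qed.

Lemma diagsub_dist_le z k : complex.Im z < 0 ->
  diagsub (fun l => (normc (g z l 0) * `|h l 0|)^-1) G
    (fun l => normc (g z l 0 - (h l 0)%:C)) k <= normc (z - lam%:C).
Proof.
move=> z_lt0; set gk := g z k 0; set hk := (h k 0)%:C.
have gk_neq0 : gk != 0 := g_neq0 k z_lt0.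
have hk_neq0 : hk != 0 by rewrite /hk eq_complex /= eqxx andbT h_neq0.
have hk_inv : hk^-1 = lam%:C - \sum_l (G k l)%:C * ((h l 0)%:C - 1).
  rewrite -fmorphV (QVE_inv h_QVE (h_neq0 k)) rmorphB rmorph_sum.
  by congr (_ - _); apply: eq_bigr => l _; rewrite rmorphM rmorphB rmorph1.
have dist_eq : gk - hk =
    gk * hk * (lam%:C - z + \sum_l (G k l)%:C * (g z l 0 - (h l 0)%:C)).
  have -> : lam%:C - z + \sum_l (G k l)%:C * (g z l 0 - (h l 0)%:C) = hk^-1 - gk^-1.
    have -> : \sum_l (G k l)%:C * (g z l 0 - (h l 0)%:C) =
        \sum_l (G k l)%:C * (g z l 0 - 1) - \sum_l (G k l)%:C * ((h l 0)%:C - 1).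
      by rewrite -sumrB; apply: eq_bigr => l _; rewrite -mulrBr opprB addrA subrK.
    by rewrite hk_inv /gk (g_inv k z_lt0); ring.
  by field; rewrite gk_neq0.
have nh_gt0 : 0 < normc gk * `|h k 0| by rewrite mulr_gt0 ?normc_gt0 ?normr_gt0.
have : normc (gk - hk) <= normc gk * `|h k 0| *
    (normc (z - lam%:C) + \sum_l G k l * normc (g z l 0 - (h l 0)%:C)).
  rewrite {1}dist_eq !ComplexField.Normc.normcM normc_real.
  apply: ler_wpM2l; first exact: ltW.
  apply: le_trans (le_normcD _ _) _; rewrite normc_distC lerD2l.
  apply: le_trans (normc_sum _) _; apply: ler_sum => l _.
  by rewrite ComplexField.Normc.normcM normc_real ger0_norm.
rewrite -ler_pdivrMl // /diagsub -/gk -/hk; lra.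
Qed.

Lemma lim_lower_of_pos_solution (y : 'I_K -> R) : (forall k, 0 < y k) ->
  (forall k, diagsub (fun l => (h l 0 ^+ 2)^-1) G y k = 1) ->
  lim_lower g lam (cmx h).
Proof.
move=> y_gt0 Hy e e_gt0.
set C := \sum_k Num.sqrt (c * y k).
have C_ge0 : 0 <= C by apply: sumr_ge0 => k _; exact: sqrtr_ge0.
exists (Num.min d (e / (C + 1))); first by rewrite lt_min d_gt0 divr_gt0 //; lra.
move=> z z_lt0; rewrite lt_min => /andP[z_near_d z_near_e] k; rewrite cmx_entry.
set dl := normc (z - lam%:C) in z_near_d z_near_e *.
have z_near : `|complex.Re z - lam| < d.
  apply: le_lt_trans z_near_d; have -> : complex.Re z - lam = complex.Re (z - lam%:C).
    by case: (z).
  exact: Re_le_normc.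
set eps := - complex.Im z; have eps_gt0 : 0 < eps by rewrite oppr_gt0.
set v := fun l => eps^-1 * complex.Im (g z l 0).
have v_gt0 l : 0 < v l by rewrite mulr_gt0 ?invr_gt0 ?g_Im_gt0.
have v_le_c l : v l <= c by rewrite ler_pdivrMl // mulrC g_Im_le.
have Hv l : diagsub (fun l => (normc (g z l 0) ^+ 2)^-1) G v l = 1.
  by rewrite diagsubZ diagsub_Im_g // mulVf // gt_eqF.
have Hy' l : diagsub (fun l => (`|h l 0| ^+ 2)^-1) G y l = 1.
  by rewrite -(Hy l); congr diagsub; apply/funext => m; rewrite real_normK ?num_real.
set p := fun l => Num.sqrt (v l * y l).
have p_gt0 l : 0 < p l by rewrite sqrtr_gt0 mulr_gt0.
have Hp l : 1 <= diagsub (fun l => (normc (g z l 0) * `|h l 0|)^-1) G p l.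
  apply: diagsub_sqrt_ge1 (Hv l) (Hy' l) => //.
  - by rewrite normc_gt0 // g_neq0.
  - by rewrite normr_gt0.
have dist_le := diagsub_upper_bound G_ge0 p_gt0 (fun l => normc_ge0 _) Hp
  (fun l => diagsub_dist_le l z_lt0) k.
have pk_le : p k <= C.
  apply: le_trans (_ : Num.sqrt (c * y k) <= C).
    by apply: ler_wsqrtr; rewrite ler_wpM2r // ltW.
  by rewrite /C (bigD1 k) //= lerDl sumr_ge0 // => l _; exact: sqrtr_ge0.
apply: (le_lt_trans dist_le); apply: (le_lt_trans (ler_wpM2l (normc_ge0 _) pk_le)).
have : dl * C <= e / (C + 1) * C by apply: ler_wpM2r => //; exact: ltW.
have : e / (C + 1) * C < e by rewrite mulrAC ltr_pdivrMr ?mulrDr; lra.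
rewrite -/dl; lra.
Qed.

Lemma lim_lower_approx : lim_lower g lam (cmx h) ->
  forall eta : R, 0 < eta -> exists eps (a' u : 'I_K -> R),
    [/\ 0 < eps, forall k, 0 < u k <= c * eps, forall k, diagsub a' G u k = eps
      & forall k, `|a' k - (h k 0 ^+ 2)^-1| < eta].
Proof.
move=> g_lim eta eta_gt0.
have [j Hj] := exists_arg_min (fun k => `|h k 0|) (Ordinal K_gt0).
set m := `|h j 0|; have m_gt0 : 0 < m by rewrite normr_gt0.
set e := Num.min (m / 2) (eta * m ^+ 3 / 10).
have e_gt0 : 0 < e by rewrite lt_min !divr_gt0 ?mulr_gt0 ?exprn_gt0.
have [del del_gt0 Hdel] := g_lim e e_gt0.
set eps := del / 2; have eps_gt0 : 0 < eps by rewrite divr_gt0.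
set z := lam +i* (- eps).
have z_lt0 : complex.Im z < 0 by rewrite /= oppr_lt0.
have z_near : `|complex.Re z - lam| < d by rewrite /= subrr normr0.
have z_near_del : normc (z - lam%:C) < del.
  rewrite /z /ComplexField.Normc.normc /= subrr subr0 expr0n /= add0r sqrrN.
  by rewrite sqrtr_sqr ger0_norm ?ltW // /eps; lra.
exists eps, (fun k => (normc (g z k 0) ^+ 2)^-1), (fun k => complex.Im (g z k 0)).
split => // k.
- by rewrite g_Im_gt0 //=; have := g_Im_le z_lt0 z_near k; rewrite /= opprK.
- by rewrite diagsub_Im_g // opprK.
have := Hdel z z_lt0 z_near_del k; rewrite cmx_entry => g_near.
rewrite -[h k 0 ^+ 2]real_normK ?num_real //.
apply: (@dist_inv_sqr_lt _ m _ _ e) => //.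
- exact: le_lt_trans (ler_dist_normc_real _ _) g_near.
- by rewrite ge_min lexx.
- by rewrite ge_min lexx orbT.
Qed.

End QVEOffSupport.

Theorem mainTheorem2 (R : realType) (K : nat) (rho : 'rV[R]_K) (S : 'M[R]_K)
  (mu : probability R R) (g : R[i] -> 'cV[R[i]]_K)
  (lam : R) (gt : 'cV[R]_K) :
  (0 < K)%N ->
  (forall k, 0 < rho 0 k < 1) ->
  \sum_(k < K) rho 0 k = 1 ->
  S^T = S ->
  (forall k l, 0 < S k l) ->
  (forall z : R[i], complex.Im z < 0 ->
     (forall k, 0 < complex.Im (g z k 0)) /\
     QVE (cmx (GammaK S rho)) z (g z)) ->
  (forall z : R[i], complex.Im z < 0 ->
     \sum_(k < K) (rho 0 k)%:C * g z k 0 = stieltjes mu z) ->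
  ~ closure (msupport mu) lam ->
  (forall k, gt k 0 != 0) ->
  QVE (GammaK S rho) lam gt ->
  lim_lower g lam (cmx gt)
  <->
  exists y : 'cV[R]_K,
    [/\ (diag_mx (map_mx (fun x => x ^- 2) gt^T) - GammaK S rho) *m y
          = const_mx 1,
        (forall y' : 'cV[R]_K,
           (diag_mx (map_mx (fun x => x ^- 2) gt^T) - GammaK S rho) *m y'
             = const_mx 1 -> y' = y)
      & forall k, 0 < y k 0].
Proof.
move=> K_gt0 rho_01 _ _ S_gt0 g_sol g_stieltjes off_supp gt_neq0 gt_QVE.
have rho_gt0 k : 0 < rho 0 k by case/andP: (rho_01 k).
have Gam_ge0 := GammaK_ge0 (fun k l => ltW (S_gt0 k l)) (fun k => ltW (rho_gt0 k)).
have g_Im_gt0 z z_lt0 := (g_sol z z_lt0).1.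
have g_QVE z z_lt0 := (g_sol z z_lt0).2.
have [d [c [d_gt0 g_Im_le]]] :=
  Im_le_off_support (rho := fun k => rho 0 k) rho_gt0 g_Im_gt0 g_stieltjes off_supp.
set M := _ - GammaK S rho.
split => [g_lim | [y [My _ y_gt0]]].
  have approx := lim_lower_approx K_gt0 g_Im_gt0 g_QVE gt_neq0 d_gt0 g_Im_le g_lim.
  have [M_unit M_inv_gt0] :=
    unitmx_inv_const1_gt0 K_gt0 Gam_ge0 approx (mulmx_diag_sub_entry _ gt).
  exists (invmx M *m const_mx 1); split => //; first by rewrite mulKVmx.
  by move=> y' <-; rewrite mulKmx.
apply: (lim_lower_of_pos_solution Gam_ge0 g_Im_gt0 g_QVE gt_neq0 gt_QVE d_gt0 g_Im_le
  (y := fun k => y k 0)) => // k.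
by rewrite -mulmx_diag_sub_entry My mxE.
Qed.
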